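(* Let $n\ge 3$, $0<m<\frac{n-2}{n}$, $m\ne\frac{n-2}{n+2}$, $\lambda>0$, $\beta>0$. Let $v$ be the radially symmetric solution described in the context, $w(s)=r^2v(r)^{1-m}$ with $s=\log r$, $h(s)=w(s)-\frac{2(n-1)(n-2-nm)}{(1-m)\beta}s$, and \[ h_1(s)=h(s)+\frac{(n-1)[n-2-(n+2)m]}{(1-m)\beta}\log s . \] Then \[ \lim_{s\to\infty}\frac{s^2h_{1,s}(s)}{\log s}=-\frac{(n-1)(n-2-(n+2)m)^2}{2(n-2-nm)(1-m)\beta}. \]
   Context: $v=v(r)$, $r=|x|$, is the unique radially symmetric positive classical solution of $\frac{n-1}{m}\Delta v^m+\frac{2\beta}{1-m}v+\beta x\cdot\nabla v=0$ in $\mathbb{R}^n$ with $v(0)=\lambda$. $h_{1,s}$ denotes the derivative of $h_1$ in $s$. *)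

From Stdlib Require Import Reals.
From Coquelicot Require Import Coquelicot.
Open Scope R_scope.

(* v : R -> R is the radial profile v(r), extended evenly to R, so that
   x |-> v(|x|) is C^2 on R^n  <=>  v is even and C^2 on R.
   Radial form of  (n-1)/m Δ(v^m) + 2β/(1-m) v + β x.∇v = 0 :
   for r > 0, with u = v^m,
     (n-1)/m (u'' + (n-1)/r u') + 2β/(1-m) v + β r v' = 0. *)
Definition radial_solution (n : nat) (m beta lambda : R) (v : R -> R) : Prop :=
  (forall r, 0 < v r) /\
  (forall r, v (- r) = v r) /\
  (forall r, ex_derive v r) /\
  (forall r, ex_derive (Derive v) r) /\
  (forall r, continuous (Derive_n v 2) r) /\
  v 0 = lambda /\
  (forall r, 0 < r ->
     (INR n - 1) / m *
       (Derive_n (fun t => Rpower (v t) m) 2 r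
        + (INR n - 1) / r * Derive (fun t => Rpower (v t) m) r)
     + 2 * beta / (1 - m) * v r + beta * r * Derive v r = 0).

Definition w_of (m : R) (v : R -> R) (s : R) : R :=
  exp (2 * s) * Rpower (v (exp s)) (1 - m).

Definition h_of (n : nat) (m beta : R) (v : R -> R) (s : R) : R :=
  w_of m v s - 2 * (INR n - 1) * (INR n - 2 - INR n * m) / ((1 - m) * beta) * s.

Definition h1_of (n : nat) (m beta : R) (v : R -> R) (s : R) : R :=
  h_of n m beta v s
  + (INR n - 1) * (INR n - 2 - (INR n + 2) * m) / ((1 - m) * beta) * ln s.

From Stdlib Require Import Reals Lra Psatz Classical.
From Coquelicot Require Import Coquelicot.
Open Scope R_scope.

(* With s = log r, the functions w = r^2 v^(1-m) and p = w'/w = 2 + (1-m) r v'/v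
   solve the autonomous system
     w' = w p,   p' = A - G w p - M p^2 - D p,
   where A = 2(n-2-nm)/(1-m), G = beta/(n-1), M = m/(1-m), D = (n-2-(n+2)m)/(1-m),
   and h1' = w p - A/G + (D/G)/s.  As p > 0 near s = -oo, barrier arguments keep
   p in a bounded interval (0, P); then w increases, and in fact w -> oo.  The
   product z = w p obeys z' = -Gamma (z - A/G) - (A/G) X with X = (M-1) p + D
   bounded and Gamma = G w + X -> oo.  A relaxation principle (y' = -Gamma y + H
   with Gamma >= 1 and H/Gamma -> l forces y -> l), applied successively to
   z - A/G, s (z - A/G) and (s^2 / log s) (z - A/G + (D/G)/s), together with
   L'Hopital's rule for w/s and (w - (A/G) s)/log s, gives
     z = A/G - (D/G)/s - D^2/(G A) log s / s^2 + o(log s / s^2). *)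

Lemma is_lim_mult' (f g : R -> R) (x : Rbar) (lf lg : R) :
  is_lim f x lf -> is_lim g x lg -> is_lim (fun y => f y * g y) x (lf * lg).
Proof. intros Hf Hg. exact (is_lim_mult f g x lf lg Hf Hg I). Qed.

Lemma is_lim_div' (f g : R -> R) (x : Rbar) (lf lg : R) :
  is_lim f x lf -> is_lim g x lg -> lg <> 0 -> is_lim (fun y => f y / g y) x (lf / lg).
Proof.
  intros Hf Hg Hlg.
  exact (is_lim_div f g x lf lg Hf Hg (fun H => Hlg (proj1 (Rbar_finite_eq _ _) H)) I).
Qed.

Lemma is_lim_inv_p_infty (f : R -> R) (x : Rbar) :
  is_lim f x p_infty -> is_lim (fun y => / f y) x 0.
Proof. intros Hf. exact (is_lim_inv f x p_infty Hf ltac:(discriminate)). Qed.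

Lemma is_lim_inv_id : is_lim (fun t => / t) p_infty 0.
Proof. apply is_lim_inv_p_infty, is_lim_id. Qed.

Lemma is_lim_inv_ln : is_lim (fun t => / ln t) p_infty 0.
Proof. apply is_lim_inv_p_infty, is_lim_ln_p. Qed.

Lemma ln_pos (t : R) : 1 < t -> 0 < ln t.
Proof. intros Ht. rewrite <- ln_1. apply ln_increasing; lra. Qed.

Lemma is_lim_bounded_mult_0 (f g : R -> R) (B : R) :
  Rbar_locally' p_infty (fun t => Rabs (f t) <= B) -> is_lim g p_infty 0 ->
  is_lim (fun t => f t * g t) p_infty 0.
Proof.
  intros [T HfB] Hg.
  assert (Hdom : is_lim (fun t => B * Rabs (g t)) p_infty 0).
  { replace (Finite 0) with (Finite (B * Rabs 0)) by (rewrite Rabs_R0; f_equal; ring).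
    apply is_lim_mult'; [apply is_lim_const | exact (is_lim_Rabs g p_infty 0 Hg)]. }
  apply (is_lim_le_le_loc (fun t => - (B * Rabs (g t))) (fun t => B * Rabs (g t))).
  - exists T. intros t Ht. apply Rabs_le_between. rewrite Rabs_mult.
    apply Rmult_le_compat_r; [apply Rabs_pos | exact (HfB t Ht)].
  - replace (Finite 0) with (Rbar_opp 0) by (simpl; f_equal; ring).
    now apply is_lim_opp.
  - exact Hdom.
Qed.

Lemma p_infty_eventually_ge (f : R -> R) (c a : R) :
  is_lim f p_infty p_infty -> exists T, a <= T /\ forall t, T <= t -> c <= f t.
Proof.
  intros Hf. destruct (proj2 (is_lim_spec f p_infty p_infty) Hf c) as [N HN].
  exists (Rmax a N + 1). split; [pose proof (Rmax_l a N); lra |].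
  intros t Ht. left. apply HN. pose proof (Rmax_r a N). lra.
Qed.

Lemma is_derive_eq (f : R -> R) (x l l' : R) : is_derive f x l -> l = l' -> is_derive f x l'.
Proof. now intros H <-. Qed.

Lemma continuity_pt_of_is_derive (f : R -> R) (x l : R) : is_derive f x l -> continuity_pt f x.
Proof. intros H. apply derivable_continuous_pt. exists l. now apply is_derive_Reals. Qed.

Lemma continuity_pt_eps_delta (f : R -> R) (x eps : R) : continuity_pt f x -> 0 < eps ->
  exists d, 0 < d /\ forall y, Rabs (y - x) < d -> Rabs (f y - f x) < eps.
Proof.
  intros Hc He. destruct (Hc eps He) as [d [Hd Hnear]]. exists d. split; [exact Hd |].
  intros y Hy. destruct (Req_dec y x) as [-> | Hne].
  - rewrite Rminus_eq_0, Rabs_R0. exact He.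
  - apply (Hnear y). split; [split; [exact I | congruence] | exact Hy].
Qed.

Lemma is_derive_pos_left (h : R -> R) (c l : R) : is_derive h c l -> 0 < l ->
  exists d, 0 < d /\ forall y, c - d < y < c -> h y < h c.
Proof.
  intros Hd Hl. apply is_derive_Reals in Hd.
  destruct (Hd l Hl) as [d Hquot]. exists d. split; [apply cond_pos |].
  intros y Hy.
  specialize (Hquot (y - c) ltac:(lra) ltac:(rewrite Rabs_left; lra)).
  replace (c + (y - c)) with y in Hquot by ring.
  apply Rabs_def2 in Hquot.
  assert (Hslope : 0 < (h y - h c) / (y - c)) by lra.
  assert (Hq : h y - h c = (h y - h c) / (y - c) * (y - c)) by (field; lra).
  nra.
Qed.

Lemma first_zero (h : R -> R) (a b : R) :
  a <= b -> (forall t, a <= t <= b -> continuity_pt h t) -> 0 < h a -> h b <= 0 ->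
  exists c, a < c <= b /\ h c = 0 /\ forall y, a <= y < c -> 0 < h y.
Proof.
  intros Hab Hc Ha Hb.
  set (E := fun x => a <= x <= b /\ forall y, a <= y <= x -> 0 < h y).
  assert (HEa : E a) by (split; [lra | intros y Hy; replace y with a by lra; exact Ha]).
  assert (Hbound : bound E) by (exists b; intros x [Hx _]; lra).
  destruct (completeness E Hbound (ex_intro _ a HEa)) as [c [Hub Hlub]].
  assert (Hac : a <= c) by exact (Hub a HEa).
  assert (Hcb : c <= b) by (apply Hlub; intros x [Hx _]; lra).
  assert (Hbelow : forall y, a <= y < c -> 0 < h y).
  { intros y Hy. destruct (classic (exists x, E x /\ y <= x)) as [[x [[_ Hx] Hyx]] | Hno].
    - apply Hx. lra.
    - exfalso. assert (c <= y); [| lra]. apply Hlub. intros x Ex.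
      destruct (Rle_or_lt x y) as [| Hlt]; [assumption |].
      exfalso. apply Hno. exists x. split; [exact Ex | lra]. }
  assert (Hzero : h c = 0).
  { destruct (Req_dec (h c) 0) as [| Hne]; [assumption | exfalso].
    destruct (continuity_pt_eps_delta h c (Rabs (h c)) (Hc c ltac:(lra)) (Rabs_pos_lt _ Hne))
      as [d [Hd Hnear]].
    destruct (Rlt_or_le (h c) 0) as [Hneg | Hpos].
    - rewrite Rabs_left in Hnear by exact Hneg.
      assert (Hac' : a < c) by (destruct (Req_dec a c) as [<- |]; lra).
      set (y := Rmax a (c - d / 2)).
      assert (Hy : a <= y < c) by (split; [apply Rmax_l | apply Rmax_lub_lt; lra]).
      assert (Hyc : Rabs (y - c) < d).
      { rewrite Rabs_left by lra. pose proof (Rmax_r a (c - d / 2)). unfold y in *. lra. }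
      specialize (Hnear y Hyc). apply Rabs_def2 in Hnear. specialize (Hbelow y Hy). lra.
    - assert (Hpos' : 0 < h c) by lra. rewrite Rabs_right in Hnear by lra.
      assert (Hcb' : c < b) by (destruct (Req_dec c b) as [-> |]; lra).
      set (x := Rmin (c + d / 2) b).
      assert (Hx : c < x) by (apply Rmin_glb_lt; lra).
      assert (HEx : E x).
      { split; [split; [lra | apply Rmin_r] |].
        intros y Hy. destruct (Rlt_or_le y c) as [Hyc | Hyc]; [apply Hbelow; lra |].
        assert (Hyd : Rabs (y - c) < d).
        { rewrite Rabs_right by lra. pose proof (Rmin_l (c + d / 2) b). unfold x in *. lra. }
        specialize (Hnear y Hyd). apply Rabs_def2 in Hnear. lra. }
      specialize (Hub x HEx). lra. }
  exists c. split; [| split; assumption].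
  split; [destruct (Req_dec a c) as [<- |]; lra | exact Hcb].
Qed.

Lemma pos_of_deriv_pos_at_zeros (h h' : R -> R) (a : R) :
  (forall t, a <= t -> is_derive h t (h' t)) -> 0 < h a ->
  (forall t, a <= t -> h t = 0 -> 0 < h' t) -> forall t, a <= t -> 0 < h t.
Proof.
  intros Hd Ha Hz t Ht. destruct (Rlt_or_le 0 (h t)) as [| Hneg]; [assumption | exfalso].
  destruct (first_zero h a t) as [c [Hc [Hc0 Hbelow]]]; auto.
  { intros u Hu. apply (continuity_pt_of_is_derive h u (h' u)), Hd. lra. }
  destruct (is_derive_pos_left h c (h' c)) as [d [Hd0 Hleft]];
    [apply Hd; lra | apply Hz; lra |].
  set (y := Rmax ((a + c) / 2) (c - d / 2)).
  pose proof (Rmax_l ((a + c) / 2) (c - d / 2)). pose proof (Rmax_r ((a + c) / 2) (c - d / 2)).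
  assert (Hyc : y < c) by (apply Rmax_lub_lt; lra).
  specialize (Hleft y ltac:(unfold y in *; lra)). specialize (Hbelow y ltac:(unfold y in *; lra)).
  lra.
Qed.

Lemma nondecreasing_of_deriv_nonneg (f f' : R -> R) (a : R) :
  (forall t, a <= t -> is_derive f t (f' t)) -> (forall t, a <= t -> 0 <= f' t) ->
  forall t, a <= t -> f a <= f t.
Proof.
  intros Hd Hpos t Ht. destruct (Req_dec a t) as [<- | Hne]; [lra |].
  destruct (MVT_gen f a t f') as [c [Hc Hmvt]];
    rewrite ?Rmin_left, ?Rmax_right in * by lra.
  - intros x Hx. apply Hd. lra.
  - intros x Hx. apply (continuity_pt_of_is_derive f x (f' x)), Hd. lra.
  - assert (0 <= f' c) by (apply Hpos; lra). nra.
Qed.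

(* The barrier [c + K e^{a-t}] is a supersolution because [Gm >= 1]. *)
Lemma relaxation_upper_bound (y Gm H : R -> R) (a c K : R) :
  (forall t, a <= t -> is_derive y t (- Gm t * y t + H t)) ->
  (forall t, a <= t -> 1 <= Gm t) ->
  (forall t, a <= t -> H t < Gm t * c) ->
  0 < K -> y a < c + K ->
  forall t, a <= t -> y t < c + K * exp (- (t - a)).
Proof.
  intros Hy HGm HH HK Hya t Ht.
  enough (0 < c + K * exp (- (t - a)) - y t) by lra.
  apply (pos_of_deriv_pos_at_zeros (fun t => c + K * exp (- (t - a)) - y t)
           (fun t => - K * exp (- (t - a)) - (- Gm t * y t + H t)) a); [| | | exact Ht].
  - intros s Hs. apply (is_derive_minus (fun t => c + K * exp (- (t - a))) y); [| now apply Hy].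
    auto_derive; [exact I | unfold Rminus; ring].
  - rewrite Rminus_eq_0, Ropp_0, exp_0. lra.
  - intros s Hs Hzero.
    assert (Hys : y s = c + K * exp (- (s - a))) by lra. rewrite Hys.
    pose proof (HH s Hs). pose proof (exp_pos (- (s - a))).
    assert (0 <= (Gm s - 1) * (K * exp (- (s - a))))
      by (apply Rmult_le_pos; [pose proof (HGm s Hs); lra | nra]).
    nra.
Qed.

Lemma is_lim_of_relaxation (y Gm H : R -> R) (t0 l : R) :
  (forall t, t0 <= t -> is_derive y t (- Gm t * y t + H t)) ->
  (forall t, t0 <= t -> 1 <= Gm t) ->
  is_lim (fun t => H t / Gm t) p_infty l -> is_lim y p_infty l.
Proof.
  intros Hy HGm Hl. apply is_lim_spec. intros eps.
  set (d := eps / 2). assert (Hd : 0 < d) by (unfold d; apply is_pos_div_2).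
  destruct (proj2 (is_lim_spec _ _ _) Hl (pos_div_2 eps)) as [N HN].
  set (a := Rmax t0 N + 1).
  assert (Ha0 : t0 <= a) by (unfold a; pose proof (Rmax_l t0 N); lra).
  assert (HaN : N < a) by (unfold a; pose proof (Rmax_r t0 N); lra).
  assert (Hband : forall t, a <= t -> Gm t * (l - d) < H t < Gm t * (l + d)).
  { intros t Ht. specialize (HN t ltac:(lra)). apply Rabs_def2 in HN.
    pose proof (HGm t ltac:(lra)).
    replace (H t) with (Gm t * (H t / Gm t)) by (field; lra).
    split; apply Rmult_lt_compat_l; simpl in HN; unfold d; lra. }
  set (K := Rabs (y a - l) + d).
  assert (HK : 0 < K) by (unfold K; pose proof (Rabs_pos (y a - l)); lra).
  pose proof (Rle_abs (y a - l)). pose proof (Rle_abs (- (y a - l))).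
  rewrite Rabs_Ropp in *.
  assert (Hy_opp : forall s, a <= s -> is_derive (fun t => - y t) s (- Gm s * - y s + - H s)).
  { intros s Hs. eapply is_derive_eq; [apply (is_derive_opp y), Hy; lra |].
    change (- (- Gm s * y s + H s) = - Gm s * - y s + - H s). ring. }
  pose proof (relaxation_upper_bound y Gm H a (l + d) K) as Hup.
  pose proof (relaxation_upper_bound (fun t => - y t) Gm (fun t => - H t) a (- (l - d)) K)
    as Hlow.
  exists (Rmax a (a - ln (d / K))). intros t Ht.
  pose proof (Rmax_l a (a - ln (d / K))). pose proof (Rmax_r a (a - ln (d / K))).
  assert (Hdecay : K * exp (- (t - a)) < d).
  { assert (Hexp : exp (- (t - a)) < d / K).
    { rewrite <- (exp_ln (d / K)) by (apply Rdiv_lt_0_compat; lra).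
      apply exp_increasing. lra. }
    apply (Rmult_lt_compat_l K) in Hexp; [| exact HK].
    replace (K * (d / K)) with d in Hexp by (field; lra). exact Hexp. }
  specialize (Hup ltac:(intros; apply Hy; lra) ltac:(intros; apply HGm; lra)
                  ltac:(intros s Hs; apply Hband, Hs) HK ltac:(unfold K; lra) t ltac:(lra)).
  specialize (Hlow Hy_opp
                   ltac:(intros; apply HGm; lra)
                   ltac:(intros s Hs; specialize (Hband s Hs); lra)
                   HK ltac:(unfold K; lra) t ltac:(lra)).
  apply Rabs_def1; simpl; unfold d in *; lra.
Qed.

Lemma variation_le_of_deriv_le (f f' g g' : R -> R) (a d : R) :
  (forall t, a <= t -> is_derive f t (f' t)) -> (forall t, a <= t -> is_derive g t (g' t)) ->
  (forall t, a <= t -> Rabs (f' t) <= d * g' t) ->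
  forall t, a <= t -> Rabs (f t - f a) <= d * (g t - g a).
Proof.
  intros Hf Hg Hbound t Ht. apply Rabs_le_between.
  assert (Hdg : forall s, a <= s -> is_derive (fun t => d * g t) s (d * g' s))
    by (intros s Hs; apply is_derive_scal, Hg, Hs).
  assert (Hband : forall s, a <= s -> - (d * g' s) <= f' s <= d * g' s)
    by (intros s Hs; apply Rabs_le_between, Hbound, Hs).
  pose proof (nondecreasing_of_deriv_nonneg (fun t => d * g t - f t)
                (fun s => d * g' s - f' s) a) as Hupper.
  pose proof (nondecreasing_of_deriv_nonneg (fun t => d * g t + f t)
                (fun s => d * g' s + f' s) a) as Hlower.
  specialize (Hupper ltac:(intros s Hs; apply (is_derive_minus (fun t => d * g t) f);
                             [apply Hdg | apply Hf]; exact Hs)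
                     ltac:(intros s Hs; specialize (Hband s Hs); lra) t Ht).
  specialize (Hlower ltac:(intros s Hs; apply (is_derive_plus (fun t => d * g t) f);
                             [apply Hdg | apply Hf]; exact Hs)
                     ltac:(intros s Hs; specialize (Hband s Hs); lra) t Ht).
  cbv beta in *. lra.
Qed.

Lemma lhopital_p_infty (f f' g g' : R -> R) (t0 l : R) :
  (forall t, t0 <= t -> is_derive f t (f' t)) ->
  (forall t, t0 <= t -> is_derive g t (g' t)) ->
  (forall t, t0 <= t -> 0 < g' t) ->
  is_lim g p_infty p_infty ->
  is_lim (fun t => f' t / g' t) p_infty l ->
  is_lim (fun t => f t / g t) p_infty l.
Proof.
  intros Hf Hg Hg' Hginf Hl. apply is_lim_spec. intros eps.
  set (d := eps / 2). assert (Hd : 0 < d) by (unfold d; apply is_pos_div_2).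
  destruct (proj2 (is_lim_spec _ _ _) Hl (pos_div_2 eps)) as [N HN].
  set (a := Rmax t0 N + 1).
  assert (Ha0 : t0 <= a) by (unfold a; pose proof (Rmax_l t0 N); lra).
  assert (HaN : N < a) by (unfold a; pose proof (Rmax_r t0 N); lra).
  assert (Hvar : forall t, a <= t ->
            Rabs ((f t - l * g t) - (f a - l * g a)) <= d * (g t - g a)).
  { apply (variation_le_of_deriv_le (fun t => f t - l * g t) (fun t => f' t - l * g' t) g g').
    - intros s Hs. apply (is_derive_minus f (fun t => l * g t)); [apply Hf; lra |].
      apply is_derive_scal, Hg; lra.
    - intros s Hs. apply Hg; lra.
    - intros t Ht. specialize (HN t ltac:(lra)). specialize (Hg' t ltac:(lra)).
      replace (f' t - l * g' t) with ((f' t / g' t - l) * g' t) by (field; lra).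
      rewrite Rabs_mult, (Rabs_right (g' t)) by lra.
      apply Rmult_le_compat_r; [lra | left; exact HN]. }
  set (C := Rabs (f a - l * g a) + d * Rabs (g a)).
  assert (HC : 0 <= C)
    by (unfold C; pose proof (Rabs_pos (f a - l * g a)); pose proof (Rabs_pos (g a)); nra).
  destruct (p_infty_eventually_ge g (C / d + 1) a Hginf) as [T [HTa HgT]].
  exists T. intros t Ht.
  specialize (HgT t ltac:(lra)). specialize (Hvar t ltac:(lra)).
  assert (HCd : 0 <= C / d) by (apply Rdiv_le_0_compat; lra).
  assert (HCg : C < d * g t).
  { replace C with (d * (C / d)) by (field; lra). apply Rmult_lt_compat_l; lra. }
  replace (f t / g t - l) with ((f t - l * g t) / g t) by (field; lra).
  rewrite Rabs_div, (Rabs_right (g t)) by lra. apply Rlt_div_l; [lra |].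
  pose proof (Rabs_triang_inv (f t - l * g t) (f a - l * g a)).
  pose proof (Rle_abs (g a)). pose proof (Rle_abs (- g a)). rewrite Rabs_Ropp in *.
  simpl. unfold C, d in *. nra.
Qed.

Section Planar_system.

Variables (A G M D : R) (W p : R -> R) (s0 : R).
Hypotheses (A_pos : 0 < A) (G_pos : 0 < G) (M_pos : 0 < M).
Hypothesis W_pos : forall s, 0 < W s.
Hypothesis W_deriv : forall s, is_derive W s (W s * p s).
Hypothesis p_deriv : forall s, is_derive p s (A - G * W s * p s - M * p s ^ 2 - D * p s).
Hypothesis p_s0_pos : 0 < p s0.

Lemma p_pos : forall t, s0 <= t -> 0 < p t.
Proof.
  apply (pos_of_deriv_pos_at_zeros p (fun s => A - G * W s * p s - M * p s ^ 2 - D * p s));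
    [intros; apply p_deriv | exact p_s0_pos |].
  intros t _ Hz. rewrite Hz. lra.
Qed.

Lemma p_bounded : exists P, forall t, s0 <= t -> p t < P.
Proof.
  pose proof (Rmax_l (p s0 + 1) (1 + (A + Rabs D) / M)) as HP1.
  pose proof (Rmax_r (p s0 + 1) (1 + (A + Rabs D) / M)) as HP2.
  set (P := Rmax (p s0 + 1) (1 + (A + Rabs D) / M)) in *.
  assert (HMP : M + A + Rabs D <= M * P).
  { apply (Rmult_le_compat_l M) in HP2; [| lra].
    replace (M * (1 + (A + Rabs D) / M)) with (M + A + Rabs D) in HP2 by (field; lra).
    exact HP2. }
  assert (HP : 1 <= P) by (pose proof (Rabs_pos D); nra).
  exists P. intros t Ht. enough (0 < P - p t) by lra.
  apply (pos_of_deriv_pos_at_zeros (fun s => P - p s)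
           (fun s => 0 - (A - G * W s * p s - M * p s ^ 2 - D * p s)) s0); [| lra | | exact Ht].
  - intros s _. apply (is_derive_minus (fun _ => P) p);
      [exact (is_derive_const (K := R_AbsRing) P s) | apply p_deriv].
  - intros s _ Hz. replace (p s) with P by lra.
    pose proof (W_pos s). pose proof (Rle_abs (- D)). rewrite Rabs_Ropp in *.
    assert (0 < G * W s * P) by (apply Rmult_lt_0_compat; [apply Rmult_lt_0_compat |]; lra).
    assert (P * (M + A + Rabs D) <= P * (M * P)) by (apply Rmult_le_compat_l; lra).
    nra.
Qed.

Lemma W_nondecreasing a t : s0 <= a -> a <= t -> W a <= W t.
Proof.
  intros Ha Hat. apply (nondecreasing_of_deriv_nonneg W (fun s => W s * p s) a);
    [intros; apply W_deriv | | exact Hat].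
  intros s Hs. apply Rlt_le, Rmult_lt_0_compat; [apply W_pos | apply p_pos; lra].
Qed.

(* If [W <= L], then [p' >= A/2 > 0] wherever [p] equals the small constant [k]. *)
Lemma p_bounded_below_of_W_bounded (L : R) :
  (forall t, s0 <= t -> W t <= L) -> exists k, 0 < k /\ forall t, s0 <= t -> k < p t.
Proof.
  intros HL.
  set (C := G * L + M + Rabs D).
  assert (HC : 0 < C).
  { pose proof (HL s0 (Rle_refl _)). pose proof (W_pos s0). pose proof (Rabs_pos D).
    unfold C. nra. }
  pose proof (Rmin_l (Rmin (p s0 / 2) 1) (A / (2 * C))) as Hk1.
  pose proof (Rmin_r (Rmin (p s0 / 2) 1) (A / (2 * C))) as Hk2.
  pose proof (Rmin_l (p s0 / 2) 1). pose proof (Rmin_r (p s0 / 2) 1).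
  set (k := Rmin (Rmin (p s0 / 2) 1) (A / (2 * C))) in *.
  assert (Hk : 0 < k).
  { apply Rmin_glb_lt; [apply Rmin_glb_lt; lra | apply Rdiv_lt_0_compat; lra]. }
  assert (HkC : k * C <= A / 2).
  { apply (Rmult_le_compat_r C) in Hk2; [| lra].
    replace (A / (2 * C) * C) with (A / 2) in Hk2 by (field; lra). exact Hk2. }
  exists k. split; [exact Hk |]. intros t Ht. enough (0 < p t - k) by lra.
  apply (pos_of_deriv_pos_at_zeros (fun s => p s - k)
           (fun s => (A - G * W s * p s - M * p s ^ 2 - D * p s) - 0) s0);
    [| lra | | exact Ht].
  - intros s _. apply (is_derive_minus p (fun _ => k));
      [apply p_deriv | exact (is_derive_const (K := R_AbsRing) k s)].
  - intros s Hs Hz. replace (p s) with k by lra.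
    specialize (HL s Hs). pose proof (W_pos s).
    assert (G * W s * k <= G * L * k) by (apply Rmult_le_compat_r; [lra | nra]).
    assert (M * k ^ 2 <= M * k).
    { assert (0 <= M * k * (1 - k)) by (apply Rmult_le_pos; [nra | lra]). nra. }
    assert (D * k <= Rabs D * k) by (apply Rmult_le_compat_r; [lra | apply Rle_abs]).
    unfold C in HkC. nra.
Qed.

Lemma W_to_p_infty : is_lim W p_infty p_infty.
Proof.
  apply is_lim_spec. intros L.
  destruct (classic (exists t, s0 <= t /\ L < W t)) as [[t [Ht HWt]] | Hbounded].
  { exists t. intros u Hu. apply (Rlt_le_trans _ (W t)); [exact HWt |].
    apply W_nondecreasing; lra. }
  exfalso.
  assert (HL : forall t, s0 <= t -> W t <= L).
  { intros t Ht. apply Rnot_lt_le. intros HWt. apply Hbounded. now exists t. }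
  destruct (p_bounded_below_of_W_bounded L HL) as [k [Hk Hkp]].
  assert (Hw0 : 0 < W s0) by apply W_pos.
  (* [W' = W p >= W s0 * k], so [W] grows at least linearly. *)
  assert (Hlin : forall t, s0 <= t -> W s0 - W s0 * k * s0 <= W t - W s0 * k * t).
  { apply (nondecreasing_of_deriv_nonneg (fun s => W s - W s0 * k * s)
             (fun s => W s * p s - W s0 * k * 1) s0).
    - intros s _. apply (is_derive_minus W (fun s => W s0 * k * s)); [apply W_deriv |].
      apply is_derive_scal. exact (is_derive_id (K := R_AbsRing) s).
    - intros s Hs. pose proof (W_nondecreasing s0 s (Rle_refl _) Hs).
      pose proof (Hkp s Hs). nra. }
  assert (HL0 : 0 < L) by (pose proof (HL s0 (Rle_refl _)); lra).
  set (t := s0 + L / (W s0 * k) + 1).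
  assert (Hq : 0 < L / (W s0 * k)) by (apply Rdiv_lt_0_compat; nra).
  assert (Hstep : W s0 * k * (t - s0) = L + W s0 * k) by (unfold t; field; nra).
  specialize (Hlin t ltac:(unfold t; lra)). specialize (HL t ltac:(unfold t; lra)).
  nra.
Qed.

Let a := A / G.
Let z t := W t * p t.
Let X t := (M - 1) * p t + D.
Let Gamma t := G * W t + X t.

Lemma is_derive_z t : is_derive z t (- Gamma t * (z t - a) - a * X t).
Proof.
  eapply is_derive_eq;
    [apply (is_derive_mult W p); [apply W_deriv | apply p_deriv | exact Rmult_comm] |].
  unfold z, Gamma, X, a, plus, mult. simpl. field. lra.
Qed.

Lemma is_derive_z_sub_a t : is_derive (fun t => z t - a) t (- Gamma t * (z t - a) + - a * X t).
Proof.
  eapply is_derive_eq;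
    [apply (is_derive_minus z (fun _ => a));
       [apply is_derive_z | exact (is_derive_const (K := R_AbsRing) a t)] |].
  unfold minus, plus, opp, zero. simpl. ring.
Qed.

Lemma X_bounded : exists B, forall t, s0 <= t -> Rabs (X t) <= B.
Proof.
  destruct p_bounded as [P HP].
  exists (Rabs (M - 1) * P + Rabs D). intros t Ht. unfold X.
  eapply Rle_trans; [apply Rabs_triang |]. rewrite Rabs_mult.
  apply Rplus_le_compat_r, Rmult_le_compat_l; [apply Rabs_pos |].
  pose proof (p_pos t Ht). pose proof (HP t Ht). rewrite Rabs_right; lra.
Qed.

Lemma Gamma_to_p_infty : is_lim Gamma p_infty p_infty.
Proof.
  destruct X_bounded as [B HB]. apply is_lim_spec. intros L.
  destruct (proj2 (is_lim_spec W p_infty p_infty) W_to_p_infty ((L + B) / G)) as [N HN].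
  exists (Rmax N s0). intros t Ht.
  specialize (HN t ltac:(pose proof (Rmax_l N s0); lra)).
  specialize (HB t ltac:(pose proof (Rmax_r N s0); lra)).
  apply (Rmult_lt_compat_l G) in HN; [| exact G_pos].
  replace (G * ((L + B) / G)) with (L + B) in HN by (field; lra).
  pose proof (Rle_abs (- X t)). rewrite Rabs_Ropp in *. unfold Gamma. lra.
Qed.

Lemma z_lim : is_lim z p_infty a.
Proof.
  destruct X_bounded as [B HB].
  destruct (p_infty_eventually_ge Gamma 1 s0 Gamma_to_p_infty) as [T [_ HGamma]].
  assert (Hdev : is_lim (fun t => z t - a) p_infty 0).
  { apply (is_lim_of_relaxation (fun t => z t - a) Gamma (fun t => - a * X t) T);
      [intros; apply is_derive_z_sub_a | exact HGamma |].
    apply (is_lim_bounded_mult_0 (fun t => - a * X t) (fun t => / Gamma t) (a * B)).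
    - exists s0. intros t Ht.
      assert (Ha : 0 < a) by (apply Rdiv_lt_0_compat; lra).
      rewrite Rabs_mult, Rabs_Ropp, (Rabs_right a) by lra.
      apply Rmult_le_compat_l; [lra | apply HB; lra].
    - apply is_lim_inv_p_infty, Gamma_to_p_infty. }
  replace (Finite a) with (Finite (0 + a)) by (f_equal; ring).
  apply (is_lim_ext (fun t => (z t - a) + a)); [intros; ring |].
  apply is_lim_plus'; [exact Hdev | apply is_lim_const].
Qed.

Lemma p_lim : is_lim p p_infty 0.
Proof.
  replace (Finite 0) with (Finite (a * 0)) by (f_equal; ring).
  apply (is_lim_ext (fun t => z t * / W t)).
  { intros t. unfold z. field. apply Rgt_not_eq, W_pos. }
  apply is_lim_mult'; [exact z_lim | apply is_lim_inv_p_infty, W_to_p_infty].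
Qed.

Lemma X_lim : is_lim X p_infty D.
Proof.
  replace (Finite D) with (Finite ((M - 1) * 0 + D)) by (f_equal; ring).
  apply is_lim_plus'; [apply is_lim_mult'; [apply is_lim_const | exact p_lim] | apply is_lim_const].
Qed.

Lemma W_div_id_lim : is_lim (fun t => W t / t) p_infty a.
Proof.
  apply (lhopital_p_infty W z (fun t => t) (fun _ => 1) 0).
  - intros; apply W_deriv.
  - intros t _. exact (is_derive_id (K := R_AbsRing) t).
  - intros; lra.
  - apply is_lim_id.
  - apply (is_lim_ext z); [intros; unfold Rdiv; rewrite Rinv_1; ring | exact z_lim].
Qed.

Lemma Gamma_div_id_lim : is_lim (fun t => Gamma t / t) p_infty A.
Proof.
  replace (Finite A) with (Finite (G * a + D * 0)) by (f_equal; unfold a; field; lra).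
  apply (is_lim_ext_loc (fun t => G * (W t / t) + X t * / t)).
  { exists 0. intros t Ht. unfold Gamma. field. lra. }
  apply is_lim_plus'; apply is_lim_mult';
    [apply is_lim_const | exact W_div_id_lim | exact X_lim | exact is_lim_inv_id].
Qed.

Lemma id_mul_p_lim : is_lim (fun t => t * p t) p_infty 1.
Proof.
  replace (Finite 1) with (Finite (a / a)) by (f_equal; unfold a; field; lra).
  apply (is_lim_ext_loc (fun t => z t / (W t / t))).
  { exists 0. intros t Ht. unfold z. field. split; [lra | apply Rgt_not_eq, W_pos]. }
  apply is_lim_div'; [exact z_lim | exact W_div_id_lim |].
  unfold a. apply Rgt_not_eq, Rdiv_lt_0_compat; lra.
Qed.

Lemma first_correction : is_lim (fun t => t * (z t - a)) p_infty (- D / G).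
Proof.
  destruct (p_infty_eventually_ge Gamma 2 1 Gamma_to_p_infty) as [T [HT1 HGamma]].
  assert (Hinv : forall t, T <= t -> 0 < / t <= 1).
  { intros t Ht. split; [apply Rinv_0_lt_compat; lra |].
    rewrite <- Rinv_1. apply Rinv_le_contravar; lra. }
  apply (is_lim_of_relaxation (fun t => t * (z t - a)) (fun t => Gamma t - / t)
           (fun t => - a * X t * t) T).
  - intros t Ht. eapply is_derive_eq.
    + apply (is_derive_mult (fun t => t) (fun t => z t - a));
        [exact (is_derive_id (K := R_AbsRing) t) | apply is_derive_z_sub_a | exact Rmult_comm].
    + unfold plus, mult, one. simpl. field. specialize (Hinv t Ht). lra.
  - intros t Ht. specialize (HGamma t Ht). specialize (Hinv t Ht). lra.
  - replace (- D / G) with ((- a * D) / (A - 0 * 0)) by (unfold a; field; lra).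
    apply (is_lim_ext_loc (fun t => (- a * X t) / (Gamma t / t - / t * / t))).
    { exists T. intros t Ht. specialize (HGamma t ltac:(lra)).
      field. split; apply Rgt_not_eq; nra. }
    apply is_lim_div'; [apply is_lim_mult'; [apply is_lim_const | exact X_lim] | | lra].
    apply is_lim_minus'; [exact Gamma_div_id_lim | apply is_lim_mult'; exact is_lim_inv_id].
Qed.

Lemma W_sub_linear_lim : is_lim (fun t => (W t - a * t) / ln t) p_infty (- D / G).
Proof.
  apply (lhopital_p_infty (fun t => W t - a * t) (fun t => z t - a) ln (fun t => / t) 1).
  - intros t _. eapply is_derive_eq.
    + apply (is_derive_minus W (fun t => a * t)); [apply W_deriv |].
      apply is_derive_scal. exact (is_derive_id (K := R_AbsRing) t).
    + unfold z, minus, plus, opp, one. simpl. ring.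
  - intros t Ht. apply is_derive_ln. lra.
  - intros t Ht. apply Rinv_0_lt_compat. lra.
  - exact is_lim_ln_p.
  - apply (is_lim_ext_loc (fun t => t * (z t - a))); [| exact first_correction].
    exists 0. intros t Ht. field. lra.
Qed.

Let c := D / G.
Let q t := t ^ 2 / ln t * (z t - a + c / t).
Let Gamma2 t := Gamma t - 2 / t + / (t * ln t).
Let H2 t := t ^ 2 / ln t * (Gamma t * c / t - a * X t - c / t ^ 2).

Lemma is_derive_q t : 1 < t -> is_derive q t (- Gamma2 t * q t + H2 t).
Proof.
  intros Ht. assert (Hln : 0 < ln t) by (apply ln_pos; lra).
  eapply is_derive_eq.
  - apply (is_derive_mult (fun t => t ^ 2 / ln t) (fun t => z t - a + c / t) t
             (2 * t / ln t - t / ln t ^ 2) (- Gamma t * (z t - a) + - a * X t + - c / t ^ 2));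
      [| | exact Rmult_comm].
    + auto_derive; [repeat split; lra | field; lra].
    + apply (is_derive_plus (fun t => z t - a) (fun t => c / t));
        [apply is_derive_z_sub_a | auto_derive; [lra | field; lra]].
  - unfold q, Gamma2, H2, plus, mult. simpl. field. lra.
Qed.

Lemma Gamma2_ge_1 : exists T, 2 <= T /\ forall t, T <= t -> 1 <= Gamma2 t.
Proof.
  destruct (p_infty_eventually_ge Gamma 3 2 Gamma_to_p_infty) as [T [HT HGamma]].
  exists T. split; [exact HT |]. intros t Ht. specialize (HGamma t Ht).
  assert (Hln : 0 < ln t) by (apply ln_pos; lra).
  assert (2 / t <= 1) by (apply Rle_div_l; lra).
  assert (0 < / (t * ln t)) by (apply Rinv_0_lt_compat, Rmult_lt_0_compat; lra).
  unfold Gamma2. lra.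
Qed.

Lemma H2_div_Gamma2_lim : is_lim (fun t => H2 t / Gamma2 t) p_infty (- D ^ 2 / (G * A)).
Proof.
  destruct Gamma2_ge_1 as [T [HT HGamma2]].
  set (R1 := fun t => D * ((W t - a * t) / ln t) - a * (M - 1) * (t * p t) * / ln t
                      + c * X t * / ln t - c * / t * / ln t).
  set (R2 := fun t => Gamma t / t - 2 * (/ t * / t) + / t * / t * / ln t).
  apply (is_lim_ext_loc (fun t => R1 t / R2 t)).
  { exists T. intros t Ht. specialize (HGamma2 t ltac:(lra)).
    assert (Hln : 0 < ln t) by (apply ln_pos; lra).
    assert (HH2 : H2 t = t * R1 t) by (unfold H2, R1, Gamma, X, c, a; field; repeat split; lra).
    assert (HGamma2' : Gamma2 t = t * R2 t) by (unfold Gamma2, R2; field; split; lra).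
    rewrite HGamma2' in HGamma2. rewrite HH2, HGamma2'.
    assert (R2 t <> 0) by (intros Hz; rewrite Hz in HGamma2; lra).
    field. split; lra. }
  replace (- D ^ 2 / (G * A))
    with ((D * (- D / G) - a * (M - 1) * 1 * 0 + c * D * 0 - c * 0 * 0)
          / (A - 2 * (0 * 0) + 0 * 0 * 0)) by (unfold c, a; field; lra).
  apply is_lim_div'; [| | lra].
  - apply is_lim_minus'; [apply is_lim_plus'; [apply is_lim_minus' |] |].
    + apply is_lim_mult'; [apply is_lim_const | exact W_sub_linear_lim].
    + apply is_lim_mult'; [apply is_lim_mult'; [apply is_lim_const | exact id_mul_p_lim] |].
      exact is_lim_inv_ln.
    + apply is_lim_mult'; [apply is_lim_mult'; [apply is_lim_const | exact X_lim] |].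
      exact is_lim_inv_ln.
    + apply is_lim_mult'; [apply is_lim_mult'; [apply is_lim_const | exact is_lim_inv_id] |].
      exact is_lim_inv_ln.
  - apply is_lim_plus'; [apply is_lim_minus'; [exact Gamma_div_id_lim |] |].
    + apply is_lim_mult'; [apply is_lim_const | apply is_lim_mult'; exact is_lim_inv_id].
    + apply is_lim_mult'; [apply is_lim_mult'; exact is_lim_inv_id | exact is_lim_inv_ln].
Qed.

Lemma second_correction :
  is_lim (fun t => t ^ 2 * (W t * p t - A / G + D / G / t) / ln t) p_infty (- D ^ 2 / (G * A)).
Proof.
  destruct Gamma2_ge_1 as [T [HT HGamma2]].
  apply (is_lim_ext_loc q).
  { exists 1. intros t Ht. assert (Hln : 0 < ln t) by (apply ln_pos; lra).
    unfold q, z, a, c. field. lra. }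
  apply (is_lim_of_relaxation q Gamma2 H2 T); [| exact HGamma2 | exact H2_div_Gamma2_lim].
  intros t Ht. apply is_derive_q. lra.
Qed.

End Planar_system.

Definition w_log_deriv (m : R) (v : R -> R) (s : R) : R :=
  2 + (1 - m) * exp s * Derive v (exp s) / v (exp s).

Section Radial_profile.

Variables (m : R) (v : R -> R).
Hypothesis v_pos : forall r, 0 < v r.
Hypothesis v_ex_derive : forall r, ex_derive v r.
Hypothesis v_ex_derive2 : forall r, ex_derive (Derive v) r.

Lemma is_derive_Rpower_v x :
  is_derive (fun t => Rpower (v t) m) x (m * Rpower (v x) m * Derive v x / v x).
Proof.
  unfold Rpower. auto_derive.
  - repeat split;
      first [apply v_ex_derive | apply v_ex_derive2 | apply v_pos | apply Rgt_not_eq, v_pos].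
  - change (Derive (fun y => v y) x) with (Derive v x). field. apply Rgt_not_eq, v_pos.
Qed.

Lemma Derive_n_2_Rpower_v x :
  Derive_n (fun t => Rpower (v t) m) 2 x =
  m * (m * Rpower (v x) m * Derive v x / v x) * Derive v x / v x
  + m * Rpower (v x) m * Derive (Derive v) x / v x
  - m * Rpower (v x) m * Derive v x * Derive v x / (v x * v x).
Proof.
  simpl. rewrite (Derive_ext _ (fun y => m * Rpower (v y) m * Derive v y / v y))
    by (intros t; apply is_derive_unique, is_derive_Rpower_v).
  apply is_derive_unique. unfold Rpower. auto_derive.
  - repeat split;
      first [apply v_ex_derive | apply v_ex_derive2 | apply v_pos | apply Rgt_not_eq, v_pos].
  - change (Derive (fun y => v y) x) with (Derive v x).
    change (Derive (fun y => Derive v y) x) with (Derive (Derive v) x).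
    field. apply Rgt_not_eq, v_pos.
Qed.

Lemma is_derive_w_of s : is_derive (w_of m v) s (w_of m v s * w_log_deriv m v s).
Proof.
  unfold w_of, w_log_deriv, Rpower. auto_derive.
  - repeat split;
      first [apply v_ex_derive | apply v_ex_derive2 | apply v_pos | apply Rgt_not_eq, v_pos].
  - change (Derive (fun y => v y) (exp s)) with (Derive v (exp s)).
    field. apply Rgt_not_eq, v_pos.
Qed.

(* As [r -> 0], [r v'(r) / v(r) -> 0], so [w'/w -> 2]. *)
Lemma w_log_deriv_pos_somewhere : exists s, 0 < w_log_deriv m v s.
Proof.
  set (phi := fun r => r * Derive v r / v r).
  assert (Hphi : continuity_pt phi 0).
  { apply continuity_pt_div; [apply continuity_pt_mult | | apply Rgt_not_eq, v_pos].
    - apply derivable_continuous_pt, derivable_pt_id.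
    - apply (continuity_pt_of_is_derive _ _ _ (Derive_correct _ 0 (v_ex_derive2 0))).
    - apply (continuity_pt_of_is_derive _ _ _ (Derive_correct _ 0 (v_ex_derive 0))). }
  destruct (continuity_pt_eps_delta phi 0 (/ (Rabs (1 - m) + 1)) Hphi) as [d [Hd Hnear]].
  { apply Rinv_0_lt_compat. pose proof (Rabs_pos (1 - m)). lra. }
  assert (Hphi0 : phi 0 = 0) by (unfold phi; field; apply Rgt_not_eq, v_pos).
  specialize (Hnear (d / 2) ltac:(rewrite Rminus_0_r, Rabs_right; lra)).
  rewrite Hphi0, Rminus_0_r in Hnear.
  assert (Hsmall : Rabs ((1 - m) * phi (d / 2)) < 1).
  { rewrite Rabs_mult. pose proof (Rabs_pos (1 - m)). pose proof (Rabs_pos (phi (d / 2))).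
    apply (Rmult_lt_compat_l (Rabs (1 - m) + 1)) in Hnear; [| lra].
    rewrite Rinv_r in Hnear by lra. nra. }
  exists (ln (d / 2)). unfold w_log_deriv. rewrite exp_ln by lra.
  replace ((1 - m) * (d / 2) * Derive v (d / 2) / v (d / 2)) with ((1 - m) * phi (d / 2))
    by (unfold phi, Rdiv; ring).
  apply Rabs_def2 in Hsmall. lra.
Qed.

(* The equation for [w'/w] is the radial equation at [r = e^s] multiplied by
   [(1 - m) r^2 v^(1-m) / ((n - 1) v)]. *)
Lemma is_derive_w_log_deriv (n : nat) (beta s : R) :
  0 < m < 1 -> 1 < INR n ->
  (forall r, 0 < r ->
     (INR n - 1) / m *
       (Derive_n (fun t => Rpower (v t) m) 2 r
        + (INR n - 1) / r * Derive (fun t => Rpower (v t) m) r)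
     + 2 * beta / (1 - m) * v r + beta * r * Derive v r = 0) ->
  is_derive (w_log_deriv m v) s
    (2 * (INR n - 2 - INR n * m) / (1 - m)
     - beta / (INR n - 1) * w_of m v s * w_log_deriv m v s
     - m / (1 - m) * w_log_deriv m v s ^ 2
     - (INR n - 2 - (INR n + 2) * m) / (1 - m) * w_log_deriv m v s).
Proof.
  intros Hm Hn Hradial.
  set (r := exp s). assert (Hr : 0 < r) by apply exp_pos.
  pose proof (v_pos r) as Hvr.
  specialize (Hradial r Hr).
  assert (HDU : Derive (fun t => Rpower (v t) m) r = m * Rpower (v r) m * Derive v r / v r)
    by (apply is_derive_unique, is_derive_Rpower_v).
  rewrite Derive_n_2_Rpower_v, HDU in Hradial.
  set (F := Rpower (v r) (1 - m)).
  assert (HF : 0 < F) by apply exp_pos.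
  assert (Hvm : Rpower (v r) m = v r / F).
  { assert (HvmF : Rpower (v r) m * F = v r).
    { unfold F. rewrite <- Rpower_plus. replace (m + (1 - m)) with 1 by ring.
      exact (Rpower_1 _ Hvr). }
    apply (Rmult_eq_reg_r F); [rewrite HvmF; field | ]; lra. }
  assert (Hw : w_of m v s = r * r * F).
  { unfold w_of, F, r. replace (2 * s) with (s + s) by ring. rewrite exp_plus. ring. }
  rewrite Hvm in Hradial. rewrite Hw. unfold w_log_deriv. fold r. auto_derive.
  - repeat split; first [apply v_ex_derive | apply v_ex_derive2 | apply Rgt_not_eq, v_pos].
  - fold r. change (Derive (fun y => v y) r) with (Derive v r).
    change (Derive (fun y => Derive v y) r) with (Derive (Derive v) r).
    apply Rminus_diag_uniq.
    match type of Hradial with ?L = 0 =>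
      transitivity ((1 - m) * r * r * F / ((INR n - 1) * v r) * L) end.
    + field. repeat split; lra.
    + rewrite Hradial. ring.
Qed.

Lemma Derive_h1_of (n : nat) (beta s : R) :
  0 < s -> m <> 1 -> beta <> 0 ->
  Derive (h1_of n m beta v) s =
    w_of m v s * w_log_deriv m v s
    - 2 * (INR n - 1) * (INR n - 2 - INR n * m) / ((1 - m) * beta)
    + (INR n - 1) * (INR n - 2 - (INR n + 2) * m) / ((1 - m) * beta) / s.
Proof.
  intros Hs Hm Hbeta. assert (Hm' : 1 - m <> 0) by (intros H; apply Hm; lra).
  apply is_derive_unique. unfold h1_of, h_of. auto_derive.
  - repeat split; [exists (w_of m v s * w_log_deriv m v s); apply is_derive_w_of | exact Hs].
  - replace (Derive (fun x => w_of m v x) s) with (w_of m v s * w_log_deriv m v s)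
      by (symmetry; apply is_derive_unique, is_derive_w_of).
    field. repeat split; first [assumption | lra].
Qed.

End Radial_profile.

Theorem lemma2p5 (n : nat) (m lambda beta : R) (v : R -> R) :
  (3 <= n)%nat ->
  0 < m -> m < (INR n - 2) / INR n ->
  m <> (INR n - 2) / (INR n + 2) ->
  0 < lambda -> 0 < beta ->
  radial_solution n m beta lambda v ->
  is_lim (fun s => s ^ 2 * Derive (h1_of n m beta v) s / ln s) p_infty
    (Finite (- ((INR n - 1) * (INR n - 2 - (INR n + 2) * m) ^ 2
                / (2 * (INR n - 2 - INR n * m) * (1 - m) * beta)))).
Proof.
  (* [v 0 = lambda] is not needed, and the case [m = (n-2)/(n+2)], where [D = 0]
     and the limit is [0], is not special. *)
  intros Hn Hm0 Hm1 _ _ Hbeta [Hv [_ [Hv' [Hv'' [_ [_ Hradial]]]]]].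
  assert (HN : 3 <= INR n) by (apply (le_INR 3) in Hn; simpl in Hn; lra).
  pose proof (proj2 (Rlt_div_r m (INR n - 2) (INR n) ltac:(lra)) Hm1) as HNm.
  assert (Hm : 0 < m < 1) by (split; nra).
  set (A := 2 * (INR n - 2 - INR n * m) / (1 - m)).
  set (G := beta / (INR n - 1)).
  set (M := m / (1 - m)).
  set (D := (INR n - 2 - (INR n + 2) * m) / (1 - m)).
  destruct (w_log_deriv_pos_somewhere m v Hv Hv' Hv'') as [s0 Hs0].
  pose proof (second_correction A G M D (w_of m v) (w_log_deriv m v) s0
    ltac:(apply Rdiv_lt_0_compat; lra) ltac:(apply Rdiv_lt_0_compat; lra)
    ltac:(apply Rdiv_lt_0_compat; lra)
    (fun s => Rmult_lt_0_compat _ _ (exp_pos _) (exp_pos _))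
    (is_derive_w_of m v Hv Hv')
    (fun s => is_derive_w_log_deriv m v Hv Hv' Hv'' n beta s Hm ltac:(lra) Hradial)
    Hs0) as Hlim.
  apply (is_lim_ext_loc (fun s =>
           s ^ 2 * (w_of m v s * w_log_deriv m v s - A / G + D / G / s) / ln s)).
  { exists 1. intros s Hs.
    assert (Hln : 0 < ln s) by (apply ln_pos; lra).
    rewrite (Derive_h1_of m v Hv Hv' n beta s) by lra.
    unfold A, G, D. field. repeat split; lra. }
  replace (- ((INR n - 1) * (INR n - 2 - (INR n + 2) * m) ^ 2
              / (2 * (INR n - 2 - INR n * m) * (1 - m) * beta)))
    with (- D ^ 2 / (G * A)) by (unfold A, G, D; field; repeat split; lra).
  exact Hlim.
Qed.
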